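(* Let $r_0\in\mathbb{R}^7$ and let $\vartheta:\mathbb{R}^7\times\mathbb{R}^2\to\mathbb{R}$ be a function such that (i) for every $z=(z_1,z_2)\in\mathbb{R}^2$: $\vartheta(r_0,z)\le 0$ if and only if there exist $t_f\in[0,\infty)$ and $(\mathbf r,\mathbf u)\in\Pi^{\mathcal K,\mathcal C}_{r_0,t_f}$ with $J_1(\mathbf r(1),t_f)\le z_1$ and $J_2(\mathbf r(1),t_f)\le z_2$; (ii) for all $z,z'\in\mathbb{R}^2$ with $z\le z'$ (componentwise), $\vartheta(r_0,z)\ge\vartheta(r_0,z')$. Let $z^*(r_0)=(z^*_1(r_0),z^*_2(r_0))$ be the utopian point and assume $\Pi^{\mathcal K,\mathcal C}_{r_0,z_2^*(r_0)}\neq\emptyset$. For $\mu=(\mu_1,\mu_2)\in[0,1]^2$ define $$\Theta_{r_0}(\mu):=\inf\Big\{\tau\ge 0\;:\;\vartheta(r_0,z^*(r_0)+\mu\tau)\le 0\ \text{and}\ \tau<\tfrac{m_{\mathrm{prop}}}{\mu_1}\Big\}\in[0,\infty],$$ and $$\Sigma_{r_0}:=\Big\{z^*(r_0)+\mu\,\Theta_{r_0}(\mu)\;:\;\mu\in[0,1]^2,\ \mu_1+\mu_2=1\Big\}.$$ Then every trajectory reconstructed from $\Sigma_{r_0}$ is weakly Pareto optimal: if $z\in\Sigma_{r_0}$, $t_f\in[0,\infty)$ and $(\mathbf r,\mathbf u)\in\Pi^{\mathcal K,\mathcal C}_{r_0,t_f}$ satisfy $J(\mathbf r(1),t_f)\le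 z$, then there is no $\hat t_f\in[0,\infty)$ and no $(\mathbf x,\mathbf v)\in\Pi^{\mathcal K,\mathcal C}_{r_0,\hat t_f}$ with $J(\mathbf x(1),\hat t_f)<J(\mathbf r(1),t_f)$.
   Context: Fixed data: a rotation rate $\Omega\ge 0$, an exhaust velocity $v_{e}>0$, masses $m_{\mathrm{dry}}>0$, $m_{\mathrm{prop}}>0$ with $m_{\min}:=m_{\mathrm{dry}}$, $m_{\max}:=m_{\mathrm{dry}}+m_{\mathrm{prop}}$, radii $0<\rho_{\min}<\rho_{\max}$, a gravitational potential $U:\mathbb{R}^3\to\mathbb{R}$ with partial derivatives $U_x,U_y,U_z$, and a control set $\mathcal U\subset\mathbb{R}^3$. States are $r=(x,y,z,v_x,v_y,v_z,m)\in\mathbb{R}^7$ and the dynamics are $\tilde f(r,u)=\big(v_x,\ v_y,\ v_z,\ U_x(x,y,z)+\Omega^2x+2\Omega v_y+\tfrac{u_x}{m},\ U_y(x,y,z)+\Omega^2y-2\Omega v_x+\tfrac{u_y}{m},\ U_z(x,y,z)+\tfrac{u_z}{m},\ -\tfrac{\sqrt{u_x^2+u_y^2+u_z^2}}{v_e}\big)$ for $u=(u_x,u_y,u_z)\in\mathcal U$. For $t_f\ge0$ put $f(r,u,t_f):=t_f\,\tilde f(r,u)$ (time rescaled to $[0,1]$). $\mathcal U_{ad}$ is the set of Lebesgue measurable functions with values in $\mathcal U$. $\mathcal K_0:=\{r\in\mathbb{R}^7:\sqrt{x^2+y^2+z^2}\in[\rho_{\min},\rho_{\max}],\ m\in(m_{\min},m_{\max}]\}$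 and $\mathcal K:=\{r\in\mathcal K_0:\exists u\in\mathcal U,\ \tilde f(r,u)\cdot\eta_r<0\}$, where $\eta_r$ is the exterior normal to $\mathcal K$ at $r$. Given $r_{\mathrm{target}}\in\mathbb{R}^7$ and $\epsilon>0$, $\mathcal C:=\{r\in\mathcal K:|r_{\mathrm{target}}-r|<\epsilon\}$, assumed nonempty and closed. $\Pi_{r_0,t_f}$ is the set of pairs $(\mathbf r,\mathbf u)$ with $\mathbf r\in W^{1,1}([0,1];\mathbb{R}^7)$, $\mathbf u\in\mathcal U_{ad}$, $\dot{\mathbf r}(s)=f(\mathbf r(s),\mathbf u(s),t_f)$ for $s\in[0,1]$, $\mathbf r(0)=r_0$. $\Pi^{\mathcal K,\mathcal C}_{r_0,t_f}$ is the subset with $\mathbf r(s)\in\mathcal K$ for all $s\in[0,1]$ and $\mathbf r(1)$ in the interior of $\mathcal C$. $\pi:=\{(r_0,t_f)\in\mathcal K\times[0,\infty):\Pi^{\mathcal K,\mathcal C}_{r_0,t_f}\ne\emptyset\}$. Objectives: $J(r_f,t_f)=(J_1,J_2)$ with $J_1(r_f,t_f):=-(r_f)_7$ (minus the final mass) and $J_2(r_f,t_f):=t_f$. Vector order: $a\le b$ iff $a_i\le b_i$ for all $i$; $a<b$ iff $a_i<b_i$ for all $i$. Utopian point: $z_i^*(r_0):=\inf\{J_i(\mathbf r(1),t_f): (r_0,t_f)\in\pi,\ (\mathbf r,\mathbf u)\in\Pi^{\mathcal K,\mathcal C}_{r_0,t_f}\}$, $i=1,2$. *)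

From mathcomp Require Import all_boot all_algebra all_classical all_reals all_analysis.
Import GRing.Theory Num.Theory.
Set Implicit Arguments. Unset Strict Implicit. Unset Printing Implicit Defensive.
Local Open Scope ring_scope.
Local Open Scope classical_set_scope.

(* Domain type of the completed Lebesgue measure on R (Lebesgue sigma-algebra). *)
Definition LebT (R : realType) : measurableType _ :=
  ltac:(let t := type of (@completed_lebesgue_measure R) in
        match t with set ?T -> _ => exact T end).

Section Defs.
Variable R : realType.

Record data := Data {
  Om : R;
  ve : R;
  mdry : R; mprop : R;
  rhomin : R; rhomax : R;
  Upot : R -> R -> R -> R;
  Uset : set 'rV[R]_3;
  rtarget : 'rV[R]_7;
  eps : R
}.

Variable P : data.

Definition mmin := mdry P.
Definition mmax := mdry P + mprop P.

(* components of a state r = (x,y,z,vx,vy,vz,m), indices 0..6 *)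
Definition cmp {n} (r : 'rV[R]_n.+1) (k : nat) : R := r 0 (inord k).

Definition dotp {n} (a b : 'rV[R]_n) : R := \sum_i a 0 i * b 0 i.
Definition enorm {n} (a : 'rV[R]_n) : R := Num.sqrt (dotp a a).

Definition Ux (x y z : R) : R := 'D_1 (fun a => Upot P a y z) x.
Definition Uy (x y z : R) : R := 'D_1 (fun a => Upot P x a z) y.
Definition Uz (x y z : R) : R := 'D_1 (fun a => Upot P x y a) z.

Definition ftilde (r : 'rV[R]_7) (u : 'rV[R]_3) : 'rV[R]_7 :=
  let x := cmp r 0 in let y := cmp r 1 in let z := cmp r 2 in
  let vx := cmp r 3 in let vy := cmp r 4 in let vz := cmp r 5 in
  let m := cmp r 6 in
  let ux := cmp u 0 in let uy := cmp u 1 in let uz := cmp u 2 in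
  \row_(i < 7) nth 0
    [:: vx; vy; vz;
        Ux x y z + Om P ^+ 2 * x + 2 * Om P * vy + ux / m;
        Uy x y z + Om P ^+ 2 * y - 2 * Om P * vx + uy / m;
        Uz x y z + uz / m;
        - (Num.sqrt (ux ^+ 2 + uy ^+ 2 + uz ^+ 2)) / ve P] i.

Definition fdyn (r : 'rV[R]_7) (u : 'rV[R]_3) (tf : R) : 'rV[R]_7 :=
  tf *: ftilde r u.

Definition rho (r : 'rV[R]_7) : R :=
  Num.sqrt (cmp r 0 ^+ 2 + cmp r 1 ^+ 2 + cmp r 2 ^+ 2).

Definition K0 (r : 'rV[R]_7) : Prop :=
  rhomin P <= rho r <= rhomax P /\ mmin < cmp r 6 <= mmax.

(* exterior unit normals of the active boundary faces of K0 at r *)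
Definition ext_normal (r : 'rV[R]_7) (eta : 'rV[R]_7) : Prop :=
  (rho r = rhomax P /\
     eta = \row_(i < 7) nth 0 [:: cmp r 0 / rho r; cmp r 1 / rho r;
                                  cmp r 2 / rho r; 0; 0; 0; 0] i) \/
  (rho r = rhomin P /\
     eta = \row_(i < 7) nth 0 [:: - (cmp r 0 / rho r); - (cmp r 1 / rho r);
                                  - (cmp r 2 / rho r); 0; 0; 0; 0] i) \/
  (cmp r 6 = mmax /\ eta = \row_(i < 7) nth 0 [:: 0; 0; 0; 0; 0; 0; 1] i).

Definition Kset (r : 'rV[R]_7) : Prop :=
  K0 r /\ exists2 u, Uset P u &
    forall eta, ext_normal r eta -> dotp (ftilde r u) eta < 0.

Definition Cset (r : 'rV[R]_7) : Prop :=
  Kset r /\ enorm (rtarget P - r) < eps P.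

Definition Cinterior (r : 'rV[R]_7) : Prop :=
  exists2 d : R, 0 < d & forall y, enorm (y - r) < d -> Cset y.

Definition Cclosed : Prop :=
  forall y, (forall d : R, 0 < d -> exists2 c, Cset c & enorm (c - y) < d) ->
    Cset y.

Definition itv01 : set (LebT R) := `[0%R, 1%R].

Definition admissible (u : R -> 'rV[R]_3) : Prop :=
  (forall s, 0 <= s <= 1 -> Uset P (u s)) /\
  forall j : 'I_3, measurable_fun itv01 ((fun s => u s 0 j) : LebT R -> R).

(* (r,u) in Pi_{r0,tf}: r in W^{1,1}([0,1]) solves r' = f(r,u,tf) a.e.
   with r(0) = r0, written in the equivalent integral (Caratheodory) form *)
Definition Pi (r0 : 'rV[R]_7) (tf : R) (r : R -> 'rV[R]_7)
    (u : R -> 'rV[R]_3) : Prop :=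
  admissible u /\
  (forall i : 'I_7, (@completed_lebesgue_measure R).-integrable itv01
      (fun s => (fdyn (r s) (u s) tf 0 i)%:E)) /\
  forall s, 0 <= s <= 1 -> forall i : 'I_7,
    r s 0 i = r0 0 i + Rintegral (@completed_lebesgue_measure R)
                          (`[0%R, s] : set (LebT R))
                          (fun t => fdyn (r t) (u t) tf 0 i).

Definition PiKC (r0 : 'rV[R]_7) (tf : R) (r : R -> 'rV[R]_7)
    (u : R -> 'rV[R]_3) : Prop :=
  Pi r0 tf r u /\ (forall s, 0 <= s <= 1 -> Kset (r s)) /\ Cinterior (r 1).

Definition J1 (rf : 'rV[R]_7) (tf : R) : R := - cmp rf 6.
Definition J2 (rf : 'rV[R]_7) (tf : R) : R := tf.

Definition zstar1 (r0 : 'rV[R]_7) : R :=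
  inf [set w : R | exists tf r u,
         [/\ 0 <= tf, PiKC r0 tf r u & w = J1 (r 1) tf]].
Definition zstar2 (r0 : 'rV[R]_7) : R :=
  inf [set w : R | exists tf r u,
         [/\ 0 <= tf, PiKC r0 tf r u & w = J2 (r 1) tf]].

(* Theta_{r0}(mu) in [0, +oo]; the constraint tau < mprop/mu1 is written
   mu1 * tau < mprop (mprop/0 = +oo) *)
Definition Theta (vt : 'rV[R]_7 -> R * R -> R) (r0 : 'rV[R]_7)
    (mu1 mu2 : R) : \bar R :=
  ereal_inf [set tau%:E | tau in
    [set tau : R | 0 <= tau /\
       vt r0 (zstar1 r0 + mu1 * tau, zstar2 r0 + mu2 * tau) <= 0 /\
       mu1 * tau < mprop P]].

(* Sigma_{r0} subset of R^2 (points with Theta = +oo are not in R^2) *)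
Definition Sigma (vt : 'rV[R]_7 -> R * R -> R) (r0 : 'rV[R]_7) : set (R * R) :=
  [set z | exists mu1 mu2 : R,
     [/\ 0 <= mu1 <= 1, 0 <= mu2 <= 1, mu1 + mu2 = 1,
         (z.1)%:E = ((zstar1 r0)%:E + mu1%:E * Theta vt r0 mu1 mu2)%E &
         (z.2)%:E = ((zstar2 r0)%:E + mu2%:E * Theta vt r0 mu1 mu2)%E]].

End Defs.

From mathcomp Require Import all_boot all_algebra all_classical all_reals all_analysis.
From mathcomp Require Import lra.
Import order.Order.TTheory GRing.Theory Num.Theory.
Set Implicit Arguments. Unset Strict Implicit.
Local Open Scope ring_scope.
Local Open Scope classical_set_scope.

(* Suppose x strictly dominates a trajectory r with J(r) <= z* + mu Theta(mu).
   Since z* <= J(x), the point J(x) lies in the box [z*, z* + mu Theta(mu)),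
   so the ray z* + mu t reaches J(x) at some time t < Theta(mu).  By (i), J(x)
   is attainable, so the ray point at time t is feasible, contradicting the
   minimality of Theta(mu). *)

Lemma ray_reaches_box (R : realFieldType) (a1 a2 w1 w2 m1 m2 th : R) :
  0 <= m1 -> 0 <= m2 -> a1 <= w1 -> a2 <= w2 ->
  w1 < a1 + m1 * th -> w2 < a2 + m2 * th ->
  exists t, [/\ 0 <= t, t < th, w1 <= a1 + m1 * t & w2 <= a2 + m2 * t].
Proof.
move=> m10 m20 aw1 aw2 wth1 wth2.
have m_gt0 (a w m : R) : 0 <= m -> a <= w -> w < a + m * th -> 0 < m.
  move=> m0 aw wth; rewrite lt_neqAle m0 andbT eq_sym.
  by apply: contraTneq wth => ->; rewrite mul0r addr0 -leNgt.
have m1p := m_gt0 _ _ _ m10 aw1 wth1.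
have m2p := m_gt0 _ _ _ m20 aw2 wth2.
have reach (a w m t : R) : 0 < m -> (w <= a + m * t) = ((w - a) / m <= t).
  by move=> mp; rewrite ler_pdivrMr // mulrC lerBlDl.
exists (Num.max ((w1 - a1) / m1) ((w2 - a2) / m2)); split.
- by rewrite le_max divr_ge0 ?subr_ge0.
- by rewrite gt_max !ltr_pdivrMr // !(mulrC th) !ltrBlDl wth1 wth2.
- by rewrite reach // le_max lexx.
- by rewrite reach // le_max lexx orbT.
Qed.

Section Utopia.
Variables (R : realType) (P : data R) (r0 : 'rV[R]_7).

Lemma zstar1_le_J1 (tf : R) x v :
  0 <= tf -> PiKC P r0 tf x v -> zstar1 P r0 <= J1 (x 1) tf.
Proof.
move=> tf0 hx; apply: ge_inf; last by exists tf, x, v.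
exists (- mmax P) => _ [t [y [w [_ [_ [yK _]] ->]]]].
have /yK[[_ /andP[_ y6]] _] : 0 <= (1 : R) <= 1 by rewrite ler01 lexx.
by rewrite /J1 lerN2.
Qed.

Lemma zstar2_le_J2 (tf : R) x v :
  0 <= tf -> PiKC P r0 tf x v -> zstar2 P r0 <= J2 (x 1) tf.
Proof.
move=> tf0 hx; apply: ge_inf; last by exists tf, x, v.
by exists 0 => _ [t [y [w [t0 _ ->]]]].
Qed.

Variable vt : 'rV[R]_7 -> R * R -> R.

Lemma Theta_gt0_below (m1 m2 th t : R) :
  0 <= m1 -> Theta P vt r0 m1 m2 = th%:E -> 0 <= t -> t < th ->
  0 < vt r0 (zstar1 P r0 + m1 * t, zstar2 P r0 + m2 * t).
Proof.
move=> m10 Th t0 tth; rewrite ltNge; apply/negP => vt_le0.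
set S := [set tau : R | 0 <= tau /\
  vt r0 (zstar1 P r0 + m1 * tau, zstar2 P r0 + m2 * tau) <= 0 /\
  m1 * tau < mprop P].
have S_lb tau : S tau -> th <= tau.
  by move=> Stau; rewrite -lee_fin -Th; apply: ereal_inf_lbound; exists tau.
have [t' St'] : exists t', S t'.
  apply: contrapT => S0; move: Th; rewrite /Theta -/S.
  suff -> : [set tau%:E | tau in S] = set0 by rewrite ereal_inf0.
  by apply/seteqP; split=> // y [tau Stau _]; apply: S0; exists tau.
have mt : m1 * t < mprop P.
  apply: le_lt_trans St'.2.2; apply: ler_wpM2l => //.
  exact/ltW/(lt_le_trans tth)/S_lb.
by have := S_lb t (conj t0 (conj vt_le0 mt)); rewrite leNgt tth.
Qed.

Lemma Sigma_finite z : Sigma P vt r0 z ->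
  exists m1 m2 th, [/\ 0 <= m1, 0 <= m2, Theta P vt r0 m1 m2 = th%:E,
    z.1 = zstar1 P r0 + m1 * th & z.2 = zstar2 P r0 + m2 * th].
Proof.
case=> m1 [m2 [/andP[m10 _] /andP[m20 _] m12 Z1 Z2]]; exists m1, m2.
have m_gt0 : 0 < m1 \/ 0 < m2.
  by case: (ltrgtP 0 m1) => [|?|m0]; [left | lra | right; lra].
case Th: (Theta P vt r0 m1 m2) => [th| |]; rewrite Th in Z1 Z2.
- by exists th; split=> //; apply/EFin_inj; rewrite ?Z1 ?Z2.
- by case: m_gt0 => mp; [move: Z1 | move: Z2]; rewrite gt0_muley.
- by case: m_gt0 => mp; [move: Z1 | move: Z2]; rewrite gt0_muleNy.
Qed.
End Utopia.

Theorem theorem1 (R : realType) (P : data R)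
  (hOm : 0 <= Om P) (hve : 0 < ve P) (hmdry : 0 < mdry P) (hmprop : 0 < mprop P)
  (hrho0 : 0 < rhomin P) (hrho : rhomin P < rhomax P) (heps : 0 < eps P)
  (hUx : forall x y z : R, derivable (fun a => Upot P a y z) x 1)
  (hUy : forall x y z : R, derivable (fun a => Upot P x a z) y 1)
  (hUz : forall x y z : R, derivable (fun a => Upot P x y a) z 1)
  (hCne : exists c, Cset P c) (hCcl : Cclosed P)
  (r0 : 'rV[R]_7) (vt : 'rV[R]_7 -> R * R -> R)
  (hi : forall z : R * R, vt r0 z <= 0 <->
          exists tf : R, 0 <= tf /\ exists r u, PiKC P r0 tf r u /\
            J1 (r 1) tf <= z.1 /\ J2 (r 1) tf <= z.2)
  (hii : forall z z' : R * R, z.1 <= z'.1 -> z.2 <= z'.2 -> vt r0 z' <= vt r0 z)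
  (hzs : exists r u, PiKC P r0 (zstar2 P r0) r u) :
  forall z, Sigma P vt r0 z ->
  forall (tf : R) r u, 0 <= tf -> PiKC P r0 tf r u ->
    J1 (r 1) tf <= z.1 -> J2 (r 1) tf <= z.2 ->
    ~ (exists (htf : R) x v, 0 <= htf /\ PiKC P r0 htf x v /\
         J1 (x 1) htf < J1 (r 1) tf /\ J2 (x 1) htf < J2 (r 1) tf).
Proof.
move=> z /Sigma_finite[m1 [m2 [th [m10 m20 Th -> ->]]]] tf r u _ _ J1r J2r.
case=> [htf [x [v [htf0 [hx [J1xr J2xr]]]]]].
have [t [t0 tth J1x J2x]] := ray_reaches_box m10 m20
  (zstar1_le_J1 htf0 hx) (zstar2_le_J2 htf0 hx)
  (lt_le_trans J1xr J1r) (lt_le_trans J2xr J2r).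
have := Theta_gt0_below m10 Th t0 tth; rewrite ltNge => /negP; apply.
by apply/hi; exists htf; split=> //; exists x, v.
Qed.
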